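(* Consider the HyperLogLogLog update procedure (described in the context) with $m$ registers, processing a stream containing $n$ distinct elements. For sufficiently large $n$ satisfying $n/(\log_2 n)^2>m^2$, with high probability the updates take amortized constant time, i.e., the total work spent on processing the $n$ distinct elements (including all calls to the compression and rebasing routines) is $O(n)$.
   Context: HyperLogLogLog sketch: parameters $m$ (a power of two), word size $w$, and $\kappa$ (bits per dense register). The uncompressed HyperLogLog registers $M'[j]\in[w]$, $j\in[m]$, are represented by a triple $(S,M,B)$: a base value $B$, a dense array $M$ of $\kappa$-bit offsets, and an associative array $S$ of (index, value) pairs; register $j$ has value $S[j]$ if $j\in S$ and $B+M[j]$ otherwise, and register $j$ is stored densely ($M[j]=M'[j]-B$) iff $B\le M'[j]<B+2^\kappa$, otherwise sparsely in $S$. Initially $S=\emptyset$, $M=0$, $B=0$. Update with element $y$: compute $j=f(y)\in[m]$ and $r=\rho(h(y))$ (the 1-based position of the first one-bit of a random $w$-bit hash value); if $r$ exceeds the current value of register $j$, set register $j$ to $r$ (densely or sparsely according to the rule above) and then call compress. Compress: choose $B'$ maximizing the number of registers $j$ with $B'\le M'[j]<B'+2^\kappa$, trying candidate base values and spending $O(m)$ work per candidate; if $B'\ne B$, rebase, i.e., reassign every register to the dense or sparse representation relative to $B'$ in $O(m)$ work, and set $B\gets B'$. Each update that does not trigger compression costs $O(1)$ work. Elements are hashed by random hash functions (register index uniform in $[m]$, $\rho$-values geometric with $\Pr[\rho=k]=2^{-k}$, independent across distinct elements). ''With high probability'' means with probability at least $1-\beta$ for a fixed constant $\beta\in(0,1)$.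 *)

From HB Require Import structures.
From mathcomp Require Import all_boot all_order all_algebra.
From mathcomp Require Import all_classical all_reals all_analysis.
Set Implicit Arguments.
Unset Strict Implicit.
Unset Printing Implicit Defensive.
Import Order.TTheory GRing.Theory Num.Theory.

(* rho of a random w-bit hash value: 1-based position of the first one
   bit; for the all-zero word we use the convention rho = w + 1. *)
Definition rho (w : nat) (x : w.-tuple bool) : nat := (index true x).+1.

Definition regs (m : nat) := {ffun 'I_m -> nat}.

Definition set_reg (m : nat) (M : regs m) (j : 'I_m) (r : nat) : regs m :=
  [ffun i => if i == j then r else M i].

(* Number of registers that would be stored densely with base b. *)
Definition window_count (m kappa : nat) (M : regs m) (b : nat) : nat :=
  #|[pred j : 'I_m | (b <= M j) && (M j < b + 2 ^ kappa)]|.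

(* Candidate base values tried by compress: the distinct register
   values (an optimal base can always be taken among them). *)
Definition candidates (m : nat) (M : regs m) : seq nat :=
  undup [seq M j | j <- enum 'I_m].

Definition best_base (m kappa : nat) (M : regs m) (B : nat) : nat :=
  let mx := \max_(b <- candidates M) window_count kappa M b in
  if mx <= window_count kappa M B then B
  else head B [seq b <- candidates M | window_count kappa M b == mx].

(* Cost of one call to compress (in units of elementary work):
   m per tried candidate, plus m for rebasing if B' <> B. *)
Definition compress_cost (m kappa : nat) (M : regs m) (B : nat) : nat :=
  m * size (candidates M) + (if best_base kappa M B != B then m else 0).

(* State: (registers M', base B, accumulated work). The triple (S,M,B)
   of the paper is determined by (M', B): register j is dense iff
   B <= M'[j] < B + 2^kappa. *)
Definition hstate (m : nat) := (regs m * nat * nat)%type.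

Definition hstep (m w kappa : nat) (s : hstate m) (e : 'I_m * w.-tuple bool)
  : hstate m :=
  let: (M, B, W) := s in
  let: (j, x) := e in
  let r := rho x in
  if M j < r then
    let M2 := set_reg M j r in
    (M2, best_base kappa M2 B, W + 1 + compress_cost kappa M2 B)
  else (M, B, W + 1).

Definition hinit (m : nat) : hstate m := ([ffun => 0%N], 0%N, 0%N).

(* Total work spent processing n distinct elements, whose hash values
   (register index, w-bit hash) are given by omega, in stream order. *)
Definition hlll_work (m w kappa n : nat)
  (omega : {ffun 'I_n -> 'I_m * w.-tuple bool}) : nat :=
  (foldl (@hstep m w kappa) (hinit m) [seq omega i | i <- enum 'I_n]).2.

Definition unif_prob (R : numFieldType) (T : finType) (E : pred T) : R :=
  (#|[pred x | E x]|%:R / #|T|%:R)%R.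

From mathcomp Require Import all_boot all_order all_algebra.
From mathcomp Require Import all_classical all_reals all_analysis.
From mathcomp Require Import zify lra.
Import Order.TTheory GRing.Theory Num.Theory.
Set Implicit Arguments.
Unset Strict Implicit.
Unset Printing Implicit Defensive.

(* Every register update strictly increases the sum of the registers. If all
   hashes have rho <= t, that sum never exceeds m t, so at most m t updates
   call compress, each at a cost O(m t): the total work is n + O(m^2 t^2).
   With t = floor(log2 n) + 1 + s and 2^s >= 1/beta, a union bound over the
   n elements shows that some rho exceeds t with probability at most
   n 2^-t <= beta, while m^2 < n / (log2 n)^2 makes m^2 t^2 = O(n). *)

Definition reg_sum (m : nat) (M : regs m) : nat := \sum_(j < m) M j.

Lemma size_candidates_le m (M : regs m) t :
  (forall j, M j <= t) -> size (candidates M) <= t.+1.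
Proof.
move=> le_Mt; rewrite -(size_iota 0 t.+1).
apply: uniq_leq_size; first exact: undup_uniq.
by move=> x; rewrite mem_undup mem_iota => /mapP[j _ ->]; rewrite ltnS le_Mt.
Qed.

Lemma compress_cost_le m kappa (M : regs m) B t :
  (forall j, M j <= t) -> compress_cost kappa M B <= m * (t + 2).
Proof.
move=> /size_candidates_le le_size; rewrite /compress_cost.
have : m * size (candidates M) <= m * t.+1 by rewrite leq_mul2l le_size orbT.
by case: ifP => _; nia.
Qed.

Lemma reg_sum_set_reg m (M : regs m) j r :
  M j < r -> reg_sum M < reg_sum (set_reg M j r).
Proof.
move=> lt_Mr; rewrite /reg_sum (bigD1 j) //= [X in _ < X](bigD1 j) //=.
rewrite ffunE eqxx [in X in _ < X](eq_bigr M) ?ltn_add2r // => i /negbTE ne_ij.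
by rewrite ffunE ne_ij.
Qed.

Section Amortization.

Variables (m w kappa t : nat).

(* [1 + m * (t + 2)] bounds the cost of one update, compress included. *)
Definition work_invariant (k : nat) (s : hstate m) : Prop :=
  (forall j, s.1.1 j <= t) /\ s.2 <= k + (1 + m * (t + 2)) * reg_sum s.1.1.

Lemma hstep_invariant k s (e : 'I_m * w.-tuple bool) :
  work_invariant k s -> rho e.2 <= t -> work_invariant k.+1 (hstep kappa s e).
Proof.
case: s => [[M B] W]; case: e => [j x] [/= le_Mt le_W] le_rho /=.
case: ifP => lt_Mj; last by split => //=; lia.
have le_M't : forall i, set_reg M j (rho x) i <= t.
  by move=> i; rewrite ffunE; case: ifP.
split => //=.
have := compress_cost_le kappa B le_M't.
have := reg_sum_set_reg lt_Mj.
set c := compress_cost _ _ _; set q := reg_sum M; set q' := reg_sum _.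
move=> lt_q le_c.
have : (1 + m * (t + 2)) * q.+1 <= (1 + m * (t + 2)) * q'.
  by rewrite leq_mul2l lt_q orbT.
rewrite mulnS; lia.
Qed.

Lemma foldl_invariant (es : seq ('I_m * w.-tuple bool)) k s :
  work_invariant k s -> (forall e, e \in es -> rho e.2 <= t) ->
  work_invariant (k + size es) (foldl (@hstep m w kappa) s es).
Proof.
elim: es k s => [|e es IH] k s inv le_rho /=; first by rewrite addn0.
rewrite addnS -addSn; apply: IH => [|e' es_e']; last first.
  by apply: le_rho; rewrite inE es_e' orbT.
by apply: hstep_invariant => //; apply: le_rho; rewrite mem_head.
Qed.

Lemma hlll_work_le n (omega : {ffun 'I_n -> 'I_m * w.-tuple bool}) :
  (forall i, rho (omega i).2 <= t) ->
  hlll_work kappa omega <= n + (1 + m * (t + 2)) * (m * t).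
Proof.
move=> le_rho; rewrite /hlll_work.
have inv0 : work_invariant 0 (hinit m) by split => // j; rewrite ffunE.
have := foldl_invariant inv0 (es := [seq omega i | i <- enum 'I_n]).
case/(_ _)/Wrap => [e /mapP[i _ ->] //|].
case: foldl => [[M B] W] [/= le_Mt le_W].
rewrite size_map size_enum_ord add0n in le_W; apply: leq_trans le_W _.
rewrite leq_add2l leq_mul2l; apply/orP; right.
rewrite -[m in m * t]card_ord -sum_nat_const; exact: leq_sum.
Qed.

Lemma hlll_work_linear a n (omega : {ffun 'I_n -> 'I_m * w.-tuple bool}) :
  (m * t.+1) ^ 2 <= a * n -> (forall i, rho (omega i).2 <= t) ->
  hlll_work kappa omega <= (1 + 2 * a) * n.
Proof.
move=> budget /hlll_work_le le_work; apply: leq_trans le_work _.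
have : m * t <= (m * t.+1) ^ 2 by nia.
have : m * m * (t * (t + 2)) <= (m * t.+1) ^ 2 by nia.
nia.
Qed.

End Amortization.

Lemma card_index_true_ge w t :
  #|[set x : w.-tuple bool | t <= index true x]| * 2 ^ t <= 2 ^ w.
Proof.
elim: w t => [|w IH] [|t]; rewrite ?muln1.
- by apply: leq_trans (max_card _) _; rewrite card_tuple card_bool.
- rewrite (_ : [set _ | _] = finset.set0) ?cards0 // -setP => x; rewrite !inE.
  by apply/negbTE; rewrite -ltnNge ltnS (leq_trans (index_size _ _)) ?size_tuple.
- by apply: leq_trans (max_card _) _; rewrite card_tuple card_bool.
set A := [set x : w.+1.-tuple bool | _].
set B := [set x : w.-tuple bool | t <= index true x].
have inj_behead : {in A &, injective (@behead_tuple w.+1 bool)}.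
  move=> [[|a x] //= sx] [[|b y] //= sy]; rewrite !inE.
  case: a; case: b => //= _ _ /(congr1 val) /= eq_xy.
  by apply: val_inj => /=; rewrite eq_xy.
have sub_AB : [set behead_tuple x | x in A] \subset B.
  apply/fintype.subsetP => y /imsetP[[[|a x] //= sx]]; rewrite !inE.
  by case: a => //= le_t ->.
have := subset_leq_card sub_AB; rewrite card_in_imset // => le_AB.
rewrite !expnS mulnCA leq_pmul2l //; apply: leq_trans (IH t).
by rewrite leq_mul2r le_AB orbT.
Qed.

Lemma card_ffun_coord n (A : finType) (i : 'I_n) (P : pred A) :
  #|[set f : {ffun 'I_n -> A} | P (f i)]| * #|A| = #|P| * #|{ffun 'I_n -> A}|.
Proof.
have n_gt0 : 0 < n := leq_ltn_trans (leq0n i) (ltn_ord i).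
pose F x := if x == i then P else predT.
have -> : #|[set f : {ffun 'I_n -> A} | P (f i)]| = #|family F|.
  apply: eq_card => f; rewrite inE; apply/idP/familyP => [Pfi x|/(_ i)].
    by rewrite /F; case: eqP => [->|].
  by rewrite /F eqxx.
rewrite card_family card_ffun foldrE big_map big_enum /= (bigD1 i) //= /F eqxx.
rewrite (eq_bigr (fun _ => #|A|)) => [|x /negbTE ->]; last exact: eq_card.
by rewrite prod_nat_const cardC1 card_ord -mulnA -expnSr prednK.
Qed.

Lemma card_ffun_coord_le n (A : finType) (i : 'I_n) (P : pred A) k :
  #|P| * k <= #|A| ->
  #|[set f : {ffun 'I_n -> A} | P (f i)]| * k <= #|{ffun 'I_n -> A}|.
Proof.
move=> le_Pk; have [A0|A_gt0] := posnP #|A|.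
  have T0 : #|{ffun 'I_n -> A}| = 0.
    by rewrite card_ffun A0 card_ord exp0n // (leq_ltn_trans (leq0n i)).
  by rewrite T0 leqn0 muln_eq0 -leqn0 -T0 max_card.
rewrite -(leq_pmul2r A_gt0) mulnAC card_ffun_coord mulnAC mulnC.
by rewrite leq_mul2l le_Pk orbT.
Qed.

Lemma card_bigcup_le (T I : finType) (F : I -> {set T}) :
  #|\bigcup_(i : I) F i| <= \sum_(i : I) #|F i|.
Proof.
apply: (big_ind2 (fun (X : {set T}) k => #|X| <= k)) => [|X a Y b le_X le_Y|//].
  by rewrite cards0.
by apply: leq_trans (leq_card_setU X Y).1 _; apply: leq_add.
Qed.

Lemma card_hash_rho_gt m w t :
  #|[pred a : 'I_m * w.-tuple bool | t < rho a.2]| * 2 ^ t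
    <= #|{: 'I_m * w.-tuple bool}|.
Proof.
pose zero_prefix := [set x : w.-tuple bool | t <= index true x].
rewrite (eq_card (B := [predX 'I_m & zero_prefix])).
  rewrite cardX card_prod card_tuple card_bool -mulnA leq_mul2l.
  by rewrite card_index_true_ge orbT.
by move=> [j x]; rewrite !inE.
Qed.

Lemma card_rho_gt n m w t :
  #|[set f : {ffun 'I_n -> 'I_m * w.-tuple bool} | [exists i, t < rho (f i).2]]|
    * 2 ^ t <= n * #|{ffun 'I_n -> 'I_m * w.-tuple bool}|.
Proof.
pose bad_at (i : 'I_n) :=
  [set f : {ffun 'I_n -> 'I_m * w.-tuple bool} | t < rho (f i).2].
have -> : [set f : {ffun 'I_n -> _} | [exists i, t < rho (f i).2]]
          = \bigcup_i bad_at i.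
  apply/setP => f; rewrite inE; apply/existsP/bigcupP => [[i]|[i _]].
    by exists i; rewrite ?inE.
  by rewrite inE; exists i.
apply: (@leq_trans ((\sum_i #|bad_at i|) * 2 ^ t)).
  by rewrite leq_mul2r card_bigcup_le orbT.
rewrite big_distrl /= -[n in n * _]card_ord -sum_nat_const leq_sum // => i _.
exact: (card_ffun_coord_le i (card_hash_rho_gt m w t)).
Qed.

Lemma card_rho_gt_log n m w s :
  #|[set f : {ffun 'I_n -> 'I_m * w.-tuple bool}
       | [exists i, (trunc_log 2 n + s).+1 < rho (f i).2]]| * 2 ^ s
    <= #|{ffun 'I_n -> 'I_m * w.-tuple bool}|.
Proof.
set tl := trunc_log 2 n.
have split_pow : 2 ^ (tl + s).+1 = 2 ^ s * 2 ^ tl.+1.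
  by rewrite -expnD addnS addnC.
have := card_rho_gt n m w (tl + s).+1; rewrite split_pow mulnA => le_bad.
rewrite -(leq_pmul2r (expn_gt0 2 tl.+1)); apply: leq_trans le_bad _.
by rewrite [X in _ <= X]mulnC leq_mul2r ltnW ?orbT ?trunc_log_ltn.
Qed.

Local Open Scope ring_scope.

Lemma exists_pow2_ge_inv (R : archiRealFieldType) (beta : R) :
  0 < beta -> exists s : nat, 1 <= beta * (2 ^ s)%:R.
Proof.
move=> beta_gt0; exists (Num.truncn beta^-1).+1.
rewrite -ler_pdivrMl // mulr1; apply/ltW/(lt_le_trans (truncnS_gt _)).
by rewrite ler_nat ltnW // ltn_expl.
Qed.

Lemma trunc_log2_le_log2 (R : realType) n : (0 < n)%N ->
  (trunc_log 2 n)%:R <= ln (n%:R : R) / ln 2.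
Proof.
move=> n_gt0; rewrite ler_pdivlMr ?ln_gt0 ?ltr1n // mulr_natl -lnXn //.
by rewrite -natrX ler_ln ?posrE ?ltr0n ?expn_gt0 // ler_nat trunc_logP.
Qed.

Lemma log2_ge1 (R : realType) n : (2 <= n)%N -> 1 <= ln (n%:R : R) / ln 2.
Proof.
move=> n_ge2; rewrite ler_pdivlMr ?ln_gt0 ?ltr1n // mul1r.
by rewrite ler_ln ?posrE ?ler_nat ?ltr0n // ltnW.
Qed.

Lemma sqr_mul_log2_le (R : realType) m n s : (2 <= n)%N ->
  m%:R ^+ 2 < n%:R / (ln (n%:R : R) / ln 2) ^+ 2 ->
  ((m * (trunc_log 2 n + s).+2) ^ 2 <= (s + 3) ^ 2 * n)%N.
Proof.
move=> n_ge2; set L := ln _ / ln 2 => lt_mL.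
have L_ge1 : 1 <= L := log2_ge1 R n_ge2.
have L_ge0 : 0 <= L := le_trans ler01 L_ge1.
have tl_le : (trunc_log 2 n)%:R <= L := trunc_log2_le_log2 R (ltnW n_ge2).
clearbody L.
have le_zL : (trunc_log 2 n + s).+2%:R <= (s + 3)%:R * L :> R.
  rewrite -addn2 -addnA !natrD; have : 0 <= s%:R :> R by []; nra.
have le_mL : m%:R ^+ 2 * L ^+ 2 <= n%:R.
  by rewrite -ler_pdivlMr ?exprn_gt0 ?(lt_le_trans ltr01) // ltW.
have sq_le : (trunc_log 2 n + s).+2%:R ^+ 2 <= ((s + 3)%:R * L) ^+ 2 :> R.
  by rewrite ler_pXn2r // nnegrE ?mulr_ge0.
rewrite -(ler_nat R) !natrX !natrM exprMn.
apply: le_trans (_ : m%:R ^+ 2 * ((s + 3)%:R * L) ^+ 2 <= _).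
  by rewrite ler_wpM2l ?exprn_ge0.
by rewrite exprMn mulrCA ler_wpM2l ?exprn_ge0.
Qed.

Lemma unif_prob_ge (R : realFieldType) (T : finType) (E : pred T) (beta : R) k :
  (0 < #|T|)%N -> 1 <= beta * k%:R -> (#|[predC E]| * k <= #|T|)%N ->
  1 - beta <= unif_prob R E.
Proof.
move=> T_gt0 le_beta le_bad; rewrite /unif_prob ler_pdivlMr ?ltr0n //.
have /(congr1 (GRing.natmul (1 : R))) :
    (#|[pred x | E x]| + #|[predC E]| = #|T|)%N.
  by rewrite -(cardC [pred x | E x]); congr (_ + _); apply: eq_card.
rewrite natrD => card_T; rewrite -(ler_nat R) natrM in le_bad.
have beta_ge0 : 0 <= beta by have : 0 <= k%:R :> R by []; nra.
have : 0 <= #|[predC E]|%:R :> R by []; nra.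
Qed.

Theorem lemma3p7 (R : realType) (beta : R) :
  0 < beta < 1 ->
  exists (C N0 : nat),
    forall (m w kappa n : nat),
      (exists k : nat, m = (2 ^ k)%N) ->
      (N0 <= n)%N ->
      (m%:R ^+ 2 < n%:R / (ln (n%:R : R) / ln (2 : R)) ^+ 2) ->
      1 - beta <=
        unif_prob R (fun omega : {ffun 'I_n -> 'I_m * w.-tuple bool} =>
                       (hlll_work kappa omega <= C * n)%N).
Proof.
move=> /andP[beta_gt0 _]; have [s le_beta] := exists_pow2_ge_inv beta_gt0.
exists (1 + 2 * (s + 3) ^ 2)%N, 2%N => m w kappa n [k ->] n_ge2 lt_m.
apply: (unif_prob_ge (k := (2 ^ s)%N)) le_beta _.
  rewrite card_ffun card_prod card_ord card_tuple card_bool.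
  by rewrite !expn_gt0 muln_gt0 !expn_gt0.
apply: leq_trans (card_rho_gt_log n (2 ^ k) w s).
rewrite leq_mul2r; apply/orP; right; apply: subset_leq_card.
apply/fintype.subsetP => omega; rewrite !inE /=; apply: contraR.
rewrite negb_exists unfold_in => /forallP le_rho.
apply: hlll_work_linear (sqr_mul_log2_le s n_ge2 lt_m) _ => i.
by rewrite leqNgt le_rho.
Qed.
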